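(* A numerical semigroup $S$ has a cyclotomic exponent sequence with only finitely many nonzero terms if and only if $S$ is a cyclotomic numerical semigroup.
   Context: A numerical semigroup is a submonoid $S$ of $(\mathbb N,+)$ with $\mathbb N\setminus S$ finite; $\mathrm P_S(x)=(1-x)\sum_{s\in S}x^s$ is its semigroup polynomial (a polynomial with constant term $1$). There are unique integers $e_1,e_2,\ldots$ such that $\mathrm P_S(x)=\prod_{j=1}^\infty(1-x^j)^{e_j}$ as formal power series; the sequence $(e_1,e_2,\ldots)$ is the cyclotomic exponent sequence of $S$. $S$ is cyclotomic if $\mathrm P_S$ has all complex roots in the closed unit disc. *)

From mathcomp Require Import all_boot all_order all_algebra all_field.
Set Implicit Arguments. Unset Strict Implicit. Unset Printing Implicit Defensive.
Import Order.TTheory GRing.Theory Num.Theory.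
Local Open Scope ring_scope.

Definition numerical_semigroup (S : pred nat) : Prop :=
  [/\ S 0%N,
      (forall a b, S a -> S b -> S (a + b)%N) &
      exists N : nat, forall n, (N <= n)%N -> S n].

Definition gap_bound (S : pred nat) (N : nat) : Prop :=
  forall n, (N <= n)%N -> S n.

(* P_S(x) = (1 - x) * sum_{s in S} x^s, computed with any gap bound N:
   sum_{s in S} x^s = sum_{s < N, s in S} x^s + x^N/(1-x). *)
Definition semigroup_poly (S : pred nat) (N : nat) : {poly int} :=
  (1 - 'X) * (\sum_(i < N | S i) 'X^i) + 'X^N.

(* Coefficient i of the power series (1 - x) * sum_{s in S} x^s. *)
Definition semigroup_coef (S : pred nat) (i : nat) : int :=
  (S i)%:Z - ((0 < i)%N && S i.-1)%:Z.

Definition geom_trunc (j n : nat) : {poly int} :=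
  \sum_(k < n.+1) 'X^(j * k).

(* (1 - x^j)^e, as a power series correct through degree n
   (for negative e, uses the truncated inverse series). *)
Definition cyc_factor (j : nat) (e : int) (n : nat) : {poly int} :=
  match e with
  | Posz m => (1 - 'X^j) ^+ m
  | Negz m => (geom_trunc j n) ^+ m.+1
  end.

(* e (with e j for j >= 1; e 0 is irrelevant) is the cyclotomic exponent
   sequence of S: P_S(x) = prod_{j>=1} (1 - x^j)^{e_j} as formal power series,
   i.e. the coefficients agree in every degree i <= n, where only the factors
   with j <= n can contribute to such coefficients. *)
Definition cyclotomic_exponent_seq (S : pred nat) (e : nat -> int) : Prop :=
  forall n i, (i <= n)%N ->
    semigroup_coef S i = (\prod_(1 <= j < n.+1) cyc_factor j (e j) n)`_i.

Definition cyclotomic_semigroup (S : pred nat) : Prop :=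
  forall N, gap_bound S N ->
    forall z : algC, root (map_poly (intr : int -> algC) (semigroup_poly S N)) z ->
      `|z| <= 1.

From mathcomp Require Import all_boot all_order all_algebra all_field.
From mathcomp Require Import ring zify.
Set Implicit Arguments. Unset Strict Implicit. Unset Printing Implicit Defensive.
Import Order.TTheory GRing.Theory Num.Theory.
Local Open Scope ring_scope.

(* If only finitely many exponents are nonzero, the formal identity
   P_S * prod (1 - x^j)^(e_j^-) = prod (1 - x^j)^(e_j^+) holds modulo every
   power of x, hence exactly, so all roots of P_S are roots of unity.
   Conversely, taking the conductor as gap bound, P_S is a monic integer
   polynomial with constant term 1. If its roots lie in the unit disc, they are
   roots of unity by Kronecker's theorem, so P_S is a product of cyclotomic
   polynomials. By induction on n through x^n - 1 = prod_(d | n) Phi_d, each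
   Phi_n is a quotient of products of binomials 1 - x^j, up to sign, which
   yields a finite exponent sequence. *)

Section CongruenceModXn.

Variables (R : comNzRingType) (n : nat).

Definition eqmodX (p q : {poly R}) := exists r : {poly R}, p - q = r * 'X^(n.+1).

Lemma eqmodX_refl p : eqmodX p p.
Proof. by exists 0; rewrite subrr mul0r. Qed.

Lemma eqmodX_sym p q : eqmodX p q -> eqmodX q p.
Proof. by case=> r e; exists (- r); rewrite mulNr -e opprB. Qed.

Lemma eqmodX_trans p q s : eqmodX p q -> eqmodX q s -> eqmodX p s.
Proof. by case=> r1 e1 [r2 e2]; exists (r1 + r2); rewrite mulrDl -e1 -e2; ring. Qed.

Lemma eqmodXM p q p' q' : eqmodX p p' -> eqmodX q q' -> eqmodX (p * q) (p' * q').
Proof.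
case=> r1 e1 [r2 e2]; exists (r1 * q + p' * r2).
have -> : p * q - p' * q' = (p - p') * q + p' * (q - q') by ring.
by rewrite e1 e2; ring.
Qed.

Lemma eqmodXMl p q q' : eqmodX q q' -> eqmodX (p * q) (p * q').
Proof. exact: eqmodXM (eqmodX_refl p). Qed.

Lemma eqmodXMr p p' q : eqmodX p p' -> eqmodX (p * q) (p' * q).
Proof. by move/eqmodXM; apply; apply: eqmodX_refl. Qed.

Lemma eqmodXX p q k : eqmodX p q -> eqmodX (p ^+ k) (q ^+ k).
Proof.
move=> pq; elim: k => [|k IH]; first by rewrite !expr0; apply: eqmodX_refl.
by rewrite !exprS; apply: eqmodXM.
Qed.

Lemma eqmodX1X p k : eqmodX p 1 -> eqmodX (p ^+ k) 1.
Proof. by move/(eqmodXX k); rewrite expr1n. Qed.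

Lemma eqmodX_prod (I : eqType) (r : seq I) (P : pred I) (F G : I -> {poly R}) :
  (forall i, i \in r -> P i -> eqmodX (F i) (G i)) ->
  eqmodX (\prod_(i <- r | P i) F i) (\prod_(i <- r | P i) G i).
Proof.
elim: r => [|x r IH] FG; first by rewrite !big_nil; apply: eqmodX_refl.
have {}IH : eqmodX (\prod_(i <- r | P i) F i) (\prod_(i <- r | P i) G i).
  by apply: IH => i ir; apply: FG; rewrite inE ir orbT.
rewrite !big_cons; case: ifP => Px //.
by apply: eqmodXM IH; apply: FG; rewrite ?mem_head.
Qed.

Lemma eqmodX_coef (p q : {poly R}) i : eqmodX p q -> (i <= n)%N -> p`_i = q`_i.
Proof.
by case=> r e le; apply/eqP; rewrite -subr_eq0 -coefB e coefMXn ltnS le.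
Qed.

Lemma coef_eqmodX (p q : {poly R}) : (forall i, (i <= n)%N -> p`_i = q`_i) -> eqmodX p q.
Proof.
move=> pq; exists (drop_poly n.+1 (p - q)).
suff t0 : take_poly n.+1 (p - q) = 0.
  by rewrite -{1}(poly_take_drop n.+1 (p - q)) t0 add0r.
apply/polyP => i; rewrite coef_take_poly coef0 coefB.
by case: ltnP => // lt_i; rewrite pq ?subrr.
Qed.

Lemma eqmodX_eq (p q : {poly R}) :
  eqmodX p q -> (size p <= n.+1)%N -> (size q <= n.+1)%N -> p = q.
Proof.
move=> pq size_p size_q; apply/polyP => i.
have [le_in|lt_ni] := leqP i n; first exact: eqmodX_coef.
by rewrite !nth_default // (leq_trans _ lt_ni).
Qed.

Lemma eqmodX_1subXn j : (n < j)%N -> eqmodX (1 - 'X^j) 1.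
Proof. by move=> lt_nj; exists (- 'X^(j - n.+1)); rewrite mulNr -exprD subnK //; ring. Qed.

End CongruenceModXn.

Lemma geom_telescope j m :
  (1 - 'X^j) * \sum_(k < m) 'X^(j * k) = 1 - 'X^(j * m) :> {poly int}.
Proof.
elim: m => [|m IH]; first by rewrite big_ord0 mulr0 muln0 expr0 subrr.
by rewrite big_ord_recr /= mulrDr IH mulnS exprD; ring.
Qed.

Lemma eqmodX_geom_trunc n j : (0 < j)%N -> eqmodX n ((1 - 'X^j) * geom_trunc j n) 1.
Proof.
move=> j_gt0; rewrite /geom_trunc geom_telescope; apply: eqmodX_1subXn.
by rewrite mulnS; have := leq_pmull n j_gt0; lia.
Qed.

Definition int_pos (e : int) : nat := if e is Posz m then m else 0.
Definition int_neg (e : int) : nat := if e is Negz m then m.+1 else 0.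

Lemma cyc_factor_int_neg n j e : (0 < j)%N ->
  eqmodX n (cyc_factor j e n * (1 - 'X^j) ^+ int_neg e) ((1 - 'X^j) ^+ int_pos e).
Proof.
move=> j_gt0; case: e => m /=; first by rewrite mulr1; apply: eqmodX_refl.
by rewrite mulrC -exprMn expr0; apply/eqmodX1X/eqmodX_geom_trunc.
Qed.

Lemma cyc_factor_subn n j (a b : nat) : (0 < j)%N ->
  eqmodX n (cyc_factor j (b%:Z - a%:Z) n) ((1 - 'X^j) ^+ b * geom_trunc j n ^+ a).
Proof.
move=> j_gt0; set G := geom_trunc j n.
have unit_pow k : eqmodX n 1 (((1 - 'X^j) * G) ^+ k).
  exact/eqmodX_sym/eqmodX1X/eqmodX_geom_trunc.
have [le_ab|lt_ba] := leqP a b.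
  rewrite subzn //= -[X in eqmodX _ X _]mulr1.
  have -> : (1 - 'X^j) ^+ b * G ^+ a = (1 - 'X^j) ^+ (b - a) * ((1 - 'X^j) * G) ^+ a.
    by rewrite exprMn mulrA -exprD subnK.
  exact/eqmodXMl/unit_pow.
have -> : b%:Z - a%:Z = Negz (a - b).-1.
  by rewrite NegzE prednK ?subn_gt0 // -subzn ?(ltnW lt_ba) // opprB.
rewrite /= prednK ?subn_gt0 // -[X in eqmodX _ X _]mulr1.
have -> : (1 - 'X^j) ^+ b * G ^+ a = G ^+ (a - b) * ((1 - 'X^j) * G) ^+ b.
  by rewrite exprMn mulrCA -exprD subnK // ltnW.
exact/eqmodXMl/unit_pow.
Qed.

Lemma eqmodX_prod_1subXn n (a : seq nat) : all (leq 1) a ->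
  eqmodX n (\prod_(j <- a) (1 - 'X^j))
           (\prod_(1 <= j < n.+1) (1 - 'X^j) ^+ count_mem j a : {poly int}).
Proof.
elim: a => [_|x a IH /= /andP[x_gt0 /IH{}IH]].
  by rewrite big_nil big1 => [|j _]; [apply: eqmodX_refl | rewrite expr0].
under [X in eqmodX _ _ X]eq_bigr do rewrite exprD.
rewrite big_cons big_split /=; apply: eqmodXM IH.
have [le_xn|lt_nx] := leqP x n.
  rewrite (bigD1_seq x) /= ?mem_index_iota ?x_gt0 ?iota_uniq // eqxx expr1.
  rewrite big1 ?mulr1 => [|j jx]; first exact: eqmodX_refl.
  by rewrite eq_sym (negbTE jx) expr0.
rewrite big1_seq => [|j /andP[_]]; first exact: eqmodX_1subXn.
by rewrite mem_index_iota => /andP[_ lt_jn]; rewrite gtn_eqF ?expr0 // (leq_trans lt_jn).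
Qed.

Lemma coef_sum_Xn_pred (S : pred nat) N i :
  (\sum_(k < N | S k) 'X^k : {poly int})`_i = ((i < N)%N && S i)%:R.
Proof.
rewrite coef_sum; under eq_bigr do rewrite coefXn.
have [/andP[lt_iN Si]|NSi] := boolP ((i < N)%N && S i).
  rewrite (bigD1 (Ordinal lt_iN)) //= eqxx big1 ?addr0 // => k /andP[_ ki].
  by case: eqP => // ik; case/eqP: ki; apply: val_inj.
by rewrite big1 // => k Sk; case: eqP => // ik; move: NSi; rewrite ik ltn_ord Sk.
Qed.

Lemma coef_semigroup_poly (S : pred nat) N i : gap_bound S N ->
  (semigroup_poly S N)`_i = semigroup_coef S i.
Proof.
move=> gbN; rewrite /semigroup_poly /semigroup_coef mulrBl mul1r coefD coefB.
rewrite coefXM !coef_sum_Xn_pred coefXn.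
case: i => [|i] /=; first by case: N gbN => [gb0|N _]; rewrite ?gb0 //; case: (S 0%N).
have [lt_iN|lt_Ni|eq_iN] := ltngtP i.+1 N; first by case: (S i.+1); case: (S i).
  by rewrite !gbN //; lia.
by rewrite gbN ?eq_iN //; case: (S i).
Qed.

Lemma prod_nat_trunc (R : pzSemiRingType) (F : nat -> R) M n : (M <= n)%N ->
  (forall j, (M < j)%N -> F j = 1) ->
  \prod_(1 <= j < n.+1) F j = \prod_(1 <= j < M.+1) F j.
Proof.
move=> le_Mn F1; rewrite (@big_cat_nat _ _ _ M.+1) //=.
by rewrite [X in _ * X]big1_seq ?mulr1 // => j /andP[_]; rewrite mem_index_iota => /andP[/F1].
Qed.

Lemma semigroup_poly_binomial_identity (S : pred nat) (e : nat -> int) M N :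
  gap_bound S N -> cyclotomic_exponent_seq S e -> (forall j, (M < j)%N -> e j = 0) ->
  semigroup_poly S N * \prod_(1 <= j < M.+1) (1 - 'X^j) ^+ int_neg (e j) =
  \prod_(1 <= j < M.+1) (1 - 'X^j) ^+ int_pos (e j).
Proof.
move=> gbN ce eM; set P := semigroup_poly S N.
set A := \prod_(1 <= j < M.+1) _; set B := \prod_(1 <= j < M.+1) _.
pose n := maxn M (size (P * A) + size B).
have PC : eqmodX n P (\prod_(1 <= j < M.+1) cyc_factor j (e j) n).
  rewrite -(@prod_nat_trunc _ _ _ n) ?leq_maxl // => [|j /eM -> //].
  by apply: coef_eqmodX => i le_in; rewrite coef_semigroup_poly //; apply: ce.
have CB : eqmodX n (\prod_(1 <= j < M.+1) cyc_factor j (e j) n * A) B.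
  rewrite -big_split; apply: eqmodX_prod => j.
  by rewrite mem_index_iota => /andP[j_gt0 _] _; apply: cyc_factor_int_neg.
apply: (eqmodX_eq (eqmodX_trans (eqmodXMr A PC) CB)).
  by rewrite (leq_trans _ (leqnSn _)) // (leq_trans _ (leq_maxr _ _)) ?leq_addr.
by rewrite (leq_trans _ (leqnSn _)) // (leq_trans _ (leq_maxr _ _)) ?leq_addl.
Qed.

Lemma exponent_seq_of_binomial_identity (S : pred nat) N (a b : seq nat) :
  gap_bound S N -> all (leq 1) a -> all (leq 1) b ->
  semigroup_poly S N * \prod_(j <- a) (1 - 'X^j) = \prod_(j <- b) (1 - 'X^j) ->
  cyclotomic_exponent_seq S (fun j => (count_mem j b)%:Z - (count_mem j a)%:Z).
Proof.
move=> gbN a_gt0 b_gt0 PAB n i le_in; rewrite -(coef_semigroup_poly i gbN).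
apply: (eqmodX_coef _ le_in).
set Ga := \prod_(1 <= j < n.+1) geom_trunc j n ^+ count_mem j a.
have AGa : eqmodX n (\prod_(j <- a) (1 - 'X^j) * Ga) 1.
  apply: eqmodX_trans (eqmodXMr Ga (eqmodX_prod_1subXn n a_gt0)) _.
  rewrite -big_split /=; under eq_bigr do rewrite -exprMn.
  have := @eqmodX_prod _ n _ (index_iota 1 n.+1) xpredT
    (fun j => ((1 - 'X^j) * geom_trunc j n) ^+ count_mem j a) (fun=> 1).
  rewrite big1_eq; apply=> j; rewrite mem_index_iota => /andP[j_gt0 _] _.
  exact/eqmodX1X/eqmodX_geom_trunc.
have BGa : eqmodX n (\prod_(j <- b) (1 - 'X^j) * Ga)
    (\prod_(1 <= j < n.+1) cyc_factor j ((count_mem j b)%:Z - (count_mem j a)%:Z) n).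
  apply: eqmodX_trans (eqmodXMr Ga (eqmodX_prod_1subXn n b_gt0)) _.
  rewrite -big_split; apply: eqmodX_sym; apply: eqmodX_prod => j.
  by rewrite mem_index_iota => /andP[j_gt0 _] _; apply: cyc_factor_subn.
apply: eqmodX_trans BGa; rewrite -PAB -mulrA -[X in eqmodX _ X _]mulr1.
exact/eqmodXMl/eqmodX_sym.
Qed.

Lemma eigenvalueX (F : fieldType) n (A : 'M[F]_n) z k :
  eigenvalue A z -> eigenvalue (A ^+ k) (z ^+ k).
Proof.
move=> /eigenvalueP[v vA v_neq0]; apply/eigenvalueP; exists v => //.
elim: k => [|k IH]; first by rewrite !expr0 mulmx1 scale1r.
by rewrite exprSr -mulmxE mulmxA IH -scalemxAl vA scalerA -exprSr.
Qed.

Lemma mulmx_prod_eq0 (F : fieldType) n (s : seq 'M[F]_n) (v : 'rV_n) :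
  v != 0 -> v *m \prod_(M <- s) M = 0 ->
  exists2 M, M \in s & exists2 w : 'rV_n, w != 0 & w *m M = 0.
Proof.
elim: s v => [|M s IH] v v_neq0; first by rewrite big_nil mulmx1 => v0; case/eqP: v_neq0.
rewrite big_cons -mulmxE mulmxA => vMs0.
have [vM0|/IH/(_ vMs0)[M' sM' kerM']] := eqVneq (v *m M) 0.
  by exists M; [apply: mem_head | exists v].
by exists M' => //; rewrite inE sM' orbT.
Qed.

Lemma eigenvalueX_inv n (A : 'M[algC]_n.+1) k w : (0 < k)%N ->
  eigenvalue (A ^+ k) w -> exists2 u, eigenvalue A u & u ^+ k = w.
Proof.
move=> k_gt0 /eigenvalueP[v vAw v_neq0].
have [r Dr] := closed_field_poly_normal ('X^k - w%:P : {poly algC}).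
rewrite (monicP (monicXnsubC w k_gt0)) scale1r in Dr.
have : v *m \prod_(M <- [seq A - u%:M | u <- r]) M = 0.
  rewrite big_map.
  have -> : \prod_(u <- r) (A - u%:M) = horner_mx A ('X^k - w%:P).
    by rewrite Dr rmorph_prod; apply: eq_bigr => u _; rewrite rmorphB /= horner_mx_X horner_mx_C.
  rewrite rmorphB /= rmorphXn /= horner_mx_X horner_mx_C mulmxBr vAw.
  by rewrite mul_mx_scalar subrr.
case/(mulmx_prod_eq0 v_neq0) => _ /mapP[u ur ->] [x x_neq0 xAu0].
exists u.
  apply/eigenvalueP; exists x => //.
  by apply/eqP; rewrite -subr_eq0 -mul_mx_scalar -mulmxBr xAu0.
have : root ('X^k - w%:P) u by rewrite Dr root_prod_XsubC.
by rewrite rootE !hornerE subr_eq0 => /eqP.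
Qed.

Lemma norm_coef_prod_XsubC (rs : seq algC) :
  {in rs, forall u, `|u| <= 1} ->
  forall i, `|(\prod_(u <- rs) ('X - u%:P))`_i| <= 2 ^+ size rs.
Proof.
elim: rs => [|u rs IH] rs_disc i /=.
  by rewrite big_nil coef1 expr0; case: (i == 0)%N; rewrite ?normr1 ?normr0.
have {}IH : forall i, `|(\prod_(v <- rs) ('X - v%:P))`_i| <= 2 ^+ size rs.
  by apply: IH => v vrs; rewrite rs_disc // inE vrs orbT.
rewrite big_cons mulrBl coefB coefXM coefCM exprS mulr_natl mulr2n.
apply: le_trans (ler_normB _ _) (lerD _ _).
  by case: ifP => _; rewrite ?normr0 ?exprn_ge0.
by rewrite normrM -[X in _ <= X]mul1r ler_pM // rs_disc ?mem_head.
Qed.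

Lemma size_map_intr (p : {poly int}) : size (map_poly (intr : int -> algC) p) = size p.
Proof. by apply: size_map_inj_poly; first apply: intr_inj. Qed.

Lemma norm_coef_monic_disc (p : {poly int}) : p \is monic ->
  (forall w : algC, root (map_poly intr p) w -> `|w| <= 1) ->
  forall i, `|p`_i| <= (2 ^ (size p).-1)%:Z.
Proof.
move=> p_monic p_disc i; set pC := map_poly (intr : int -> algC) p.
have [r Dr] := closed_field_poly_normal pC.
rewrite (monicP (monic_map _ p_monic)) scale1r in Dr.
have size_r : size r = (size p).-1.
  by rewrite -(size_map_intr p) -/pC Dr size_prod_XsubC.
have r_disc : {in r, forall u, `|u| <= 1}.
  by move=> u ur; apply: p_disc; rewrite -/pC Dr root_prod_XsubC.
have := norm_coef_prod_XsubC r_disc i.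
by rewrite -Dr coef_map /= -intr_norm size_r -natrX -(ler_int algC).
Qed.

Lemma bounded_int_polys_root_cover m C :
  exists2 P : {poly algC}, P != 0 &
    forall q : {poly int}, q != 0 -> (size q <= m.+1)%N -> (forall i, `|q`_i| <= C%:Z) ->
      forall x, root (map_poly intr q) x -> root P x.
Proof.
pose T := {ffun 'I_m.+1 -> 'I_(C.*2).+1}.
pose poly_of (f : T) : {poly int} := \poly_(i < m.+1) ((f (inord i) : nat)%:Z - C%:Z).
exists (\prod_(f : T | poly_of f != 0) map_poly (intr : int -> algC) (poly_of f)).
  by apply/prodf_neq0 => f f_neq0; rewrite -size_poly_eq0 size_map_intr size_poly_eq0.
move=> q q_neq0 size_q q_bounded x qx.
pose f : T := [ffun i : 'I_m.+1 => inord (absz (q`_i + C%:Z))].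
suff fq : poly_of f = q by rewrite (bigD1 f) ?fq //= rootM qx.
apply/polyP => i; rewrite coef_poly; case: ltnP => [lt_im|le_mi]; last first.
  by rewrite nth_default // (leq_trans size_q).
have := q_bounded i; rewrite ffunE (inordK lt_im) ler_norml.
move: (q`_i) => c /andP[c_ge c_le]; rewrite inordK; lia.
Qed.

Lemma root_unity_of_pow_roots (F : idomainType) (p : {poly F}) z : p != 0 -> z != 0 ->
  (forall k, root p (z ^+ k.+1)) -> exists2 m, (0 < m)%N & z ^+ m = 1.
Proof.
move=> p_neq0 z_neq0 pz; set s := [seq z ^+ k.+1 | k <- iota 0 (size p)].
have /(uniqPn 0)[i [j [lt_ij]]] : ~~ uniq s.
  apply/negP => s_uniq; have /(max_poly_roots p_neq0)/(_ s_uniq) : all (root p) s.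
    by apply/allP => _ /mapP[k _ ->].
  by rewrite size_map size_iota ltnn.
rewrite size_map size_iota => lt_jp.
rewrite !(nth_map 0%N) ?size_iota ?(ltn_trans lt_ij) // !nth_iota ?(ltn_trans lt_ij) //.
rewrite !add0n => zij; exists (j - i)%N; first by rewrite subn_gt0.
apply: (mulfI (expf_neq0 i.+1 z_neq0)); rewrite -exprD mulr1 zij.
by rewrite addSn subnKC // ltnW.
Qed.

(* The characteristic polynomials of the powers of A have integer coefficients
   bounded in terms of n only, so finitely many of them carry all powers of z. *)
Lemma kronecker_mx n (A : 'M[int]_n) (z : algC) :
  (forall w : algC, root (map_poly intr (char_poly A)) w -> `|w| <= 1) ->
  root (map_poly intr (char_poly A)) z -> z != 0 ->
  exists2 m, (0 < m)%N & z ^+ m = 1.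
Proof.
case: n A => [|n] A A_disc Az z_neq0.
  by move: Az; rewrite map_char_poly /char_poly det_mx00 (negbTE (root1 _)).
pose Ac := map_mx (intr : int -> algC) A.
have rootA w : root (map_poly intr (char_poly A)) w = eigenvalue Ac w.
  by rewrite map_char_poly eigenvalue_root_char.
have rootAX k w : root (map_poly intr (char_poly (A ^+ k))) w = eigenvalue (Ac ^+ k) w.
  by rewrite map_char_poly rmorphXn eigenvalue_root_char.
have [P P_neq0 P_cover] := bounded_int_polys_root_cover n.+1 (2 ^ n.+1).
apply: (root_unity_of_pow_roots P_neq0 z_neq0) => k.
set B := char_poly (A ^+ k.+1).
have B_disc (w : algC) : root (map_poly intr B) w -> `|w| <= 1.
  rewrite /B rootAX => /(eigenvalueX_inv (ltn0Sn k))[u Au <-].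
  by rewrite normrX exprn_ile1 // A_disc // rootA.
apply: (P_cover B).
- by rewrite monic_neq0 // char_poly_monic.
- by rewrite size_char_poly.
- by move=> i; have := norm_coef_monic_disc (char_poly_monic _) B_disc i; rewrite size_char_poly.
- by rewrite /B rootAX; apply: eigenvalueX; rewrite -rootA.
Qed.

Lemma kronecker (p : {poly int}) : p \is monic ->
  (forall w : algC, root (map_poly intr p) w -> `|w| <= 1) ->
  forall z : algC, root (map_poly intr p) z -> z != 0 ->
  exists2 m, (0 < m)%N & z ^+ m = 1.
Proof.
by move=> p_monic p_disc z; rewrite -(companionmxK p_monic) in p_disc *; apply: kronecker_mx.
Qed.

Definition binomial_ratio (p : {poly int}) := exists (a b : seq nat) (s : nat),
  [/\ all (leq 1) a, all (leq 1) b &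
      p * \prod_(j <- a) (1 - 'X^j) = (-1) ^+ s * \prod_(j <- b) (1 - 'X^j)].

Lemma binomial_ratio1 : binomial_ratio 1.
Proof. by exists [::], [::], 0%N; split => //; rewrite !big_nil expr0 !mulr1. Qed.

Lemma binomial_ratioM p q :
  binomial_ratio p -> binomial_ratio q -> binomial_ratio (p * q).
Proof.
move=> [a1 [b1 [s1 [a1_gt0 b1_gt0 pE]]]] [a2 [b2 [s2 [a2_gt0 b2_gt0 qE]]]].
exists (a1 ++ a2), (b1 ++ b2), (s1 + s2)%N; rewrite !all_cat a1_gt0 a2_gt0 b1_gt0 b2_gt0.
split=> //; rewrite !big_cat exprD /=.
transitivity ((p * \prod_(j <- a1) (1 - 'X^j)) * (q * \prod_(j <- a2) (1 - 'X^j))).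
  by ring.
by rewrite pE qE; ring.
Qed.

Lemma binomial_ratio_divl p q :
  binomial_ratio (p * q) -> binomial_ratio q -> binomial_ratio p.
Proof.
move=> [a1 [b1 [s1 [a1_gt0 b1_gt0 pqE]]]] [a2 [b2 [s2 [a2_gt0 b2_gt0 qE]]]].
exists (b2 ++ a1), (b1 ++ a2), (s1 + s2)%N; rewrite !all_cat a1_gt0 a2_gt0 b1_gt0 b2_gt0.
split=> //; rewrite !big_cat exprD /=.
set A1 := \prod_(j <- a1) _ in pqE *; set A2 := \prod_(j <- a2) _ in qE *.
set B1 := \prod_(j <- b1) _ in pqE *; set B2 := \prod_(j <- b2) _ in qE *.
have sign2 : ((-1) ^+ s2 * (-1) ^+ s2 : {poly int}) = 1.
  by rewrite -exprMn mulrNN mulr1 expr1n.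
transitivity ((-1) ^+ s2 * (-1) ^+ s2 * (p * (B2 * A1))); first by rewrite sign2 mul1r.
transitivity ((-1) ^+ s2 * (p * ((-1) ^+ s2 * B2) * A1)); first by ring.
rewrite -qE; transitivity ((-1) ^+ s2 * (A2 * (p * q * A1))); first by ring.
by rewrite pqE; ring.
Qed.

Lemma binomial_ratio_prod (I : Type) (r : seq I) (P : pred I) (F : I -> {poly int}) :
  (forall i, P i -> binomial_ratio (F i)) -> binomial_ratio (\prod_(i <- r | P i) F i).
Proof.
move=> FP; elim: r => [|x r IH]; first by rewrite big_nil; apply: binomial_ratio1.
by rewrite big_cons; case: ifP => Px //; apply: binomial_ratioM (FP _ Px) IH.
Qed.

Lemma binomial_ratio_Xn_sub1 n : (0 < n)%N -> binomial_ratio ('X^n - 1).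
Proof.
move=> n_gt0; exists [::], [:: n], 1%N; rewrite /= n_gt0 big_nil big_seq1 mulr1.
by split=> //; rewrite expr1 mulN1r opprB.
Qed.

Lemma binomial_ratio_Cyclotomic n : (0 < n)%N -> binomial_ratio 'Phi_n.
Proof.
elim/ltn_ind: n => n IH n_gt0; have := prod_Cyclotomic n_gt0.
rewrite (bigD1_seq n) ?divisors_uniq -?dvdn_divisors // => Xn_sub1.
apply: (@binomial_ratio_divl _ (\prod_(d <- divisors n | d != n) 'Phi_d)).
  by rewrite Xn_sub1; apply: binomial_ratio_Xn_sub1.
rewrite big_seq_cond; apply: binomial_ratio_prod => d /andP[].
rewrite -dvdn_divisors // => dvd_dn d_neq_n; apply: IH; last exact: dvdn_gt0 dvd_dn.
by rewrite ltn_neqAle d_neq_n dvdn_leq.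
Qed.

Lemma modp_Cyclotomic_eq0 (p : {poly int}) k (z : algC) :
  k.-primitive_root z -> root (map_poly intr p) z -> p %% 'Phi_k = 0.
Proof.
move=> prim_z pz.
have Dp := Pdiv.IdomainMonic.divp_eq (Cyclotomic_monic k) p.
set r := p %% 'Phi_k in Dp *.
have rz : root (map_poly (intr : int -> algC) r) z.
  have Phiz : root (map_poly (intr : int -> algC) 'Phi_k) z.
    by rewrite (Cintr_Cyclotomic prim_z) root_cyclotomic.
  have -> : r = p - p %/ 'Phi_k * 'Phi_k by apply/eqP; rewrite eq_sym subr_eq addrC -Dp.
  by rewrite rmorphB rmorphM /= rootE !hornerE (rootP Phiz) (rootP pz) mulr0 subr0.
have [pz_rat [Dpz _] dvd_pz] := minCpolyP z.
have size_pz : size pz_rat = size 'Phi_k.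
  rewrite -(size_map_inj_poly (fmorph_inj (@ratr algC)) (rmorph0 _) pz_rat) -Dpz.
  by rewrite (minCpoly_cyclotomic prim_z) -(Cintr_Cyclotomic prim_z) size_map_intr.
pose rQ := map_poly (intr : int -> rat) r.
have rQ_rz : map_poly ratr rQ = map_poly (intr : int -> algC) r.
  by rewrite -map_poly_comp; apply: eq_map_poly => x /=; apply: rmorph_int.
have size_rQ : size rQ = size r by apply: size_map_inj_poly; first apply: intr_inj.
apply/eqP; apply: contraT => r_neq0.
have rQ_neq0 : rQ != 0 by rewrite -size_poly_eq0 size_rQ size_poly_eq0.
have := dvdp_leq rQ_neq0 (_ : pz_rat %| rQ); rewrite -dvd_pz rQ_rz => /(_ rz).
by rewrite size_pz size_rQ leqNgt ltn_modpN0 // monic_neq0 // Cyclotomic_monic.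
Qed.

Lemma binomial_ratio_monic (p : {poly int}) : p \is monic ->
  (forall z : algC, root (map_poly intr p) z -> exists2 m, (0 < m)%N & z ^+ m = 1) ->
  binomial_ratio p.
Proof.
have [m] := ubnP (size p); elim: m p => // m IH p /ltnSE size_p p_monic p_unity.
have [size_p1|size_p2] := leqP (size p) 1.
  have Dp := size1_polyC size_p1.
  have p0 : p`_0 = 1 by move: (monicP p_monic); rewrite {1}Dp lead_coefC.
  by rewrite Dp p0; apply: binomial_ratio1.
have [z pz] : exists z : algC, root (map_poly intr p) z.
  by apply/closed_rootP; rewrite size_map_intr gtn_eqF.
have [k1 k1_gt0 zk1] := p_unity z pz.
have [k prim_z _] := prim_order_exists k1_gt0 zk1.
have Dp := Pdiv.IdomainMonic.divp_eq (Cyclotomic_monic k) p.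
rewrite (modp_Cyclotomic_eq0 prim_z pz) addr0 in Dp.
set q := p %/ 'Phi_k in Dp.
have q_monic : q \is monic by rewrite -(monicMr q (Cyclotomic_monic k)) -Dp.
rewrite Dp; apply: binomial_ratioM; last exact/binomial_ratio_Cyclotomic/prim_order_gt0/prim_z.
apply: IH => // [|w qw]; last by apply: p_unity; rewrite Dp rmorphM rootM qw.
have := size_Mmonic (monic_neq0 q_monic) (Cyclotomic_monic k).
rewrite -Dp size_Cyclotomic addnS /= => Dsize.
have := totient_gt0 k; rewrite (prim_order_gt0 prim_z) => totient_gt0.
by apply: leq_trans size_p; rewrite Dsize -{1}[size q]addn0 ltn_add2l.
Qed.

Lemma horner0_prod_1subXn (a : seq nat) : all (leq 1) a ->
  (\prod_(j <- a) (1 - 'X^j) : {poly int}).[0] = 1.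
Proof.
move=> /allP a_gt0; rewrite horner_prod big_seq big1 // => j /a_gt0 j_gt0.
by rewrite !hornerE expr0n eqn0Ngt j_gt0 subr0.
Qed.

Lemma binomial_ratio_horner0 p : binomial_ratio p -> p.[0] = 1 ->
  exists a b, [/\ all (leq 1) a, all (leq 1) b &
                 p * \prod_(j <- a) (1 - 'X^j) = \prod_(j <- b) (1 - 'X^j)].
Proof.
case=> a [b [s [a_gt0 b_gt0 pE]]] p0; exists a, b; split=> //.
have := congr1 (horner^~ 0) pE; rewrite /= !hornerM !horner0_prod_1subXn // p0 !mulr1.
rewrite -signr_odd in pE *; case: (odd s) pE => /= pE; last by rewrite expr0 mul1r in pE.
by rewrite !hornerE.
Qed.

Lemma norm_root_1subXn_exp j k (z : algC) : (0 < j)%N ->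
  root (map_poly intr ((1 - 'X^j) ^+ k : {poly int})) z -> `|z| = 1.
Proof.
move=> j_gt0; rewrite rmorphXn rmorphB /= rmorph1 map_polyXn rootE !hornerE.
rewrite expf_eq0 subr_eq0 => /andP[_ /eqP zj].
by apply/eqP; rewrite -(pexpr_eq1 j_gt0) // -normrX -zj normr1.
Qed.

Lemma gap_bound_conductor (S : pred nat) N : gap_bound S N ->
  exists c, gap_bound S c /\ ((0 < c)%N -> ~~ S c.-1).
Proof.
elim: N => [|N IH] gbN; first by exists 0%N.
have [SN|NSN] := boolP (S N); last by exists N.+1.
by apply: IH => n; rewrite leq_eqVlt => /predU1P[<- //|]; apply: gbN.
Qed.

Lemma semigroup_poly_monic (S : pred nat) c :
  gap_bound S c -> ((0 < c)%N -> ~~ S c.-1) -> semigroup_poly S c \is monic.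
Proof.
move=> gbc NSc; set P := semigroup_poly S c.
have Pc : P`_c = 1.
  rewrite coef_semigroup_poly // /semigroup_coef gbc //.
  by case: (c) NSc => [|c'] //= /(_ isT)/negbTE ->.
have P_gt i : (c < i)%N -> P`_i = 0.
  move=> lt_ci; rewrite coef_semigroup_poly // /semigroup_coef !gbc ?(ltnW lt_ci) //;
    by case: (i) lt_ci.
have size_P : size P = c.+1.
  apply/eqP; rewrite eqn_leq; apply/andP; split; first by apply/leq_sizeP.
  by rewrite ltnNge; apply/negP => /leq_sizeP/(_ c (leqnn c)); rewrite Pc.
by rewrite monicE /lead_coef size_P Pc.
Qed.

Lemma horner0_semigroup_poly (S : pred nat) N :
  S 0%N -> gap_bound S N -> (semigroup_poly S N).[0] = 1.
Proof. by move=> S0 gbN; rewrite horner_coef0 coef_semigroup_poly // /semigroup_coef S0. Qed.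

Lemma cyclotomic_of_finite_exponents (S : pred nat) (e : nat -> int) M :
  cyclotomic_exponent_seq S e -> (forall j, (M < j)%N -> e j = 0) ->
  cyclotomic_semigroup S.
Proof.
move=> ce eM N gbN z Pz.
have : root (map_poly intr (\prod_(1 <= j < M.+1) (1 - 'X^j) ^+ int_pos (e j))) z.
  by rewrite -(semigroup_poly_binomial_identity gbN ce eM) rmorphM rootM Pz.
rewrite rmorph_prod /= rootE horner_prod prodf_seq_eq0 => /hasP[j].
by rewrite mem_index_iota => /andP[j_gt0 _] /andP[_ /norm_root_1subXn_exp ->].
Qed.

Lemma finite_exponents_of_cyclotomic (S : pred nat) :
  S 0%N -> (exists N, gap_bound S N) -> cyclotomic_semigroup S ->
  exists e : nat -> int, cyclotomic_exponent_seq S e /\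
    exists M : nat, forall j, (M < j)%N -> e j = 0.
Proof.
move=> S0 [N /gap_bound_conductor[c [gbc NSc]]] S_cyc.
have P_monic := semigroup_poly_monic gbc NSc.
have P0 := horner0_semigroup_poly S0 gbc.
have P_unity (z : algC) : root (map_poly intr (semigroup_poly S c)) z ->
    exists2 m, (0 < m)%N & z ^+ m = 1.
  move=> Pz; apply: (kronecker P_monic (S_cyc c gbc) Pz).
  apply/eqP => z0; move: Pz; rewrite z0 rootE horner_coef0 coef_map /=.
  by rewrite -horner_coef0 P0 oner_eq0.
have [a [b [a_gt0 b_gt0 PAB]]] :=
  binomial_ratio_horner0 (binomial_ratio_monic P_monic P_unity) P0.
exists (fun j => (count_mem j b)%:Z - (count_mem j a)%:Z).
split; first exact: exponent_seq_of_binomial_identity gbc a_gt0 b_gt0 PAB.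
exists (\max_(j <- a ++ b) j)%N => j lt_j.
have : j \notin a ++ b.
  by apply: contraTN lt_j => jab; rewrite -leqNgt (@leq_bigmax_seq _ _ xpredT id j jab).
by rewrite mem_cat negb_or => /andP[/count_memPn -> /count_memPn ->].
Qed.

Theorem lemma9 (S : pred nat) :
  numerical_semigroup S ->
  ((exists e : nat -> int, cyclotomic_exponent_seq S e /\
      exists M : nat, forall j, (M < j)%N -> e j = 0)
   <-> cyclotomic_semigroup S).
Proof.
case=> S0 _ gap_bounded; split=> [[e [ce [M eM]]]|].
  exact: cyclotomic_of_finite_exponents ce eM.
exact: finite_exponents_of_cyclotomic.
Qed.
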